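(* Let $\Gamma=G_3$ be the graph with two vertices $V_\alpha,V_\beta$ joined by exactly three edges (no loops), with degrees $d_\alpha,d_\beta\in\mathbb{Z}$. The family $\mathcal{F}(G_3,(d_\alpha,d_\beta))$ is jumping if and only if $0\le d_\alpha\le 1$ and $0\le d_\beta\le 1$.
   Context: Let $\Gamma$ be a connected graph (loops and multiple edges allowed) with vertices $V_1,\dots,V_n$ and integers $d_1,\dots,d_n$. A nodal curve with dual graph $\Gamma$ and rational components is a curve $C$ obtained from the disjoint union of copies $\mathbb{P}^1_{V_i}$ of $\mathbb{P}^1$ by choosing, for each edge of $\Gamma$, a point on each of its endpoint copies (all chosen points distinct) and identifying these two points to a node. A line bundle on $C$ is equivalent to line bundles on each $\mathbb{P}^1_{V_i}$ together with, at each node, an identification of the two fibres (descent data, a scalar in $\mathbb{C}^*$ after trivialising); global sections are tuples of sections on the $\mathbb{P}^1$'s compatible with these identifications. The family $\mathcal{F}(\Gamma,(d_i))$ consists of all pairs $(C,L)$ with $C$ such a curve (any choice of node positions) and $L$ a line bundle on $C$ whose pullback to $\mathbb{P}^1_{V_i}$ has degree $d_i$ for all $i$ (any descent data). $\Gamma$ with degrees $(d_i)$ is called jumping if $h^0(C,L)$ is not constant on $\mathcal{F}(\Gamma,(d_i))$, and non-jumping otherwise. *)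

From HB Require Import structures.
From mathcomp Require Import all_boot all_order all_algebra.
From mathcomp Require Import complex.
From mathcomp Require Import reals.
Set Implicit Arguments. Unset Strict Implicit. Unset Printing Implicit Defensive.
Import Order.TTheory GRing.Theory Num.Theory.
Local Open Scope ring_scope.

(* A graph with vertices 'I_n and edges 'I_m; edge e has endpoints
   (ends e).1 and (ends e).2 (loops and multiple edges allowed).
   Half-edges are pairs (e, b) with b = false for the first endpoint and
   b = true for the second. *)
Definition hv (n m : nat) (ends : 'I_m -> 'I_n * 'I_n) (e : 'I_m) (b : bool) : 'I_n :=
  if b then (ends e).2 else (ends e).1.

(* Number of coefficients of a section of O(d) on P^1 :
   h^0(P^1, O(d)) = d+1 if d >= 0, 0 otherwise. *)
Definition dn (d : int) : nat := match d with Posz k => k.+1 | Negz _ => 0%N end.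

Definition coefT (n : nat) (d : 'I_n -> int) : finType := {v : 'I_n & 'I_(dn (d v))}.

Section Sections.
Variable K : fieldType.
Variables (n m : nat) (ends : 'I_m -> 'I_n * 'I_n) (d : 'I_n -> int).

(* A tuple of sections of O(d v) on the copies P^1_v: a homogeneous polynomial
   of degree d v in (X,Y) on each copy, given by its coefficients. *)
Definition secs := {ffun coefT d -> K^o}.

(* value at the point with homogeneous coordinates (x,y) of the section on P^1_v:
   sum_k c_k x^k y^(d_v - k), i.e. the section in the trivialisation of the fibre
   of O(d_v) at [x:y] given by the representative (x,y). *)
Definition sec_eval (c : secs) (v : 'I_n) (p : K * K) : K :=
  \sum_(k < dn (d v)) c (Tagged (fun w => 'I_(dn (d w))) k) * p.1 ^+ k * p.2 ^+ ((dn (d v)).-1 - k)%N.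

(* Node points: pt e b is the (homogeneous coordinates of the) point on
   P^1_(hv ends e b) glued along edge e; lam e is the descent datum at the node. *)
Definition glue_defect (pt : 'I_m -> bool -> K * K) (lam : 'I_m -> K) (c : secs)
  : {ffun 'I_m -> K^o} :=
  [ffun e => sec_eval c (hv ends e true) (pt e true)
             - lam e * sec_eval c (hv ends e false) (pt e false)].

(* h^0(C, L): dimension of the space of compatible tuples of sections. *)
Definition h0 (pt : 'I_m -> bool -> K * K) (lam : 'I_m -> K) : nat :=
  \dim (lker (linfun (glue_defect pt lam))).

Definition admissible (pt : 'I_m -> bool -> K * K) (lam : 'I_m -> K) : Prop :=
  [/\ forall e b, pt e b != (0, 0),
      forall e b e' b', (e, b) != (e', b') -> hv ends e b = hv ends e' b' ->
        (pt e b).1 * (pt e' b').2 != (pt e' b').1 * (pt e b).2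
    & forall e, lam e != 0].

Definition jumping : Prop :=
  exists pt lam pt' lam', admissible pt lam /\ admissible pt' lam' /\
    h0 pt lam <> h0 pt' lam'.
End Sections.

Definition G3_ends : 'I_3 -> 'I_2 * 'I_2 := fun _ => (ord0, ord_max).
Definition deg2 (da db : int) : 'I_2 -> int := fun v => if v == ord0 then da else db.

From HB Require Import structures.
From mathcomp Require Import all_boot all_order all_algebra.
From mathcomp Require Import complex reals ring zify.
Import Order.TTheory GRing.Theory Num.Theory.
Local Open Scope ring_scope.
Set Implicit Arguments. Unset Strict Implicit.

(* A section of L is a coefficient vector c (the coefficients of the forms on the two
   copies of P^1), and the glue defect is linear in c, given by a coefficient array:
   glue_defect c e = \sum_x c x * glue_coef e x.  So h^0 = dim ker is the number of
   coefficients minus the rank of the glue map; the rank equals the number of edges when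
   the rows glue_coef e are linearly independent, and is smaller as soon as a nonzero
   combination of the rows vanishes.

   Not jumping: if some degree is >= 2, evaluation of forms of that degree at three
   distinct points of P^1 gives independent functionals (form_values_indep), so the rank
   is always 3 and h^0 is constant; otherwise, if some degree is negative and the other
   is <= 1, a compatible section is a form of degree <= 1 vanishing at three distinct
   points, so h^0 = 0.  Jumping: for degrees in {0, 1} we put the points (1:0), (0:1),
   (-1:2) on both copies; the descent data (1,1,2) give independent rows while for
   (1,1,1) the combination (1,-2,1) of the rows vanishes, and in degrees (0, 0) these
   data give h^0 = 0 and h^0 = 1 respectively. *)

Section CoefficientMaps.
Variables (K : fieldType) (X : finType) (m : nat).
Variable f : {linear {ffun X -> K^o} -> {ffun 'I_m -> K^o}}.
Variable W : 'I_m -> X -> K.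
Hypothesis fE : forall c i, f c i = \sum_x c x * W i x.

Lemma dim_lker_limg : (\dim (lker (linfun f)) + \dim (limg (linfun f)) = #|X|)%N.
Proof. by have := limg_ker_dim (linfun f) fullv; rewrite capfv dimvf /dim /= muln1. Qed.

(* If the rows W i are linearly independent, f is onto: the matrix of the rows is
   row-free, so its transpose has a right inverse, which yields preimages. *)
Lemma limg_full_of_indep :
  (forall a : 'I_m -> K, (forall x, \sum_i a i * W i x = 0) -> forall i, a i = 0) ->
  \dim (limg (linfun f)) = m.
Proof.
move=> indep.
pose M : 'M[K]_(m, #|X|) := \matrix_(i, j) W i (enum_val j).
have M_free : row_free M.
  apply: inj_row_free => a Ha; apply/rowP => i; rewrite mxE.
  apply: (indep (fun i => a 0 i)) => x.
  have := congr1 (fun r : 'rV_#|X| => r 0 (enum_rank x)) Ha.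
  by rewrite !mxE; under eq_bigr do rewrite mxE enum_rankK.
have /row_fullP [B MB] : row_full M^T by rewrite /row_full mxrank_tr.
suff -> : limg (linfun f) = fullv by rewrite dimvf /dim /= card_ord muln1.
apply/eqP; rewrite eqEsubv subvf /=; apply/subvP => t _.
pose u := (\row_i t i) *m B.
have -> : t = linfun f [ffun x => u 0 (enum_rank x)].
  apply/ffunP => i; rewrite lfunE fE (reindex (fun j : 'I_#|X| => enum_val j)) /=; last first.
    by exists enum_rank => x _; rewrite ?enum_valK ?enum_rankK.
  transitivity ((u *m M^T) 0 i); first by rewrite -mulmxA MB mulmx1 mxE.
  by rewrite mxE; apply: eq_bigr => j _; rewrite ffunE enum_valK !mxE.
exact: memv_img (memvf _).
Qed.

(* A nonzero vanishing combination a of the rows is a nonzero linear form vanishing on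
   the image of f, so f is not onto. *)
Lemma limg_lt_of_annihilator (a : 'I_m -> K) (i0 : 'I_m) : a i0 != 0 ->
  (forall x, \sum_i a i * W i x = 0) -> (\dim (limg (linfun f)) < m)%N.
Proof.
move=> a_i0 ann; rewrite ltnNge; apply/negP => dim_full.
have full : limg (linfun f) = fullv.
  by apply/eqP; rewrite eqEdim subvf dimvf /dim /= card_ord muln1.
pose t : {ffun 'I_m -> K^o} := [ffun i => (i == i0)%:R].
have /memv_imgP [c _] : t \in limg (linfun f) by rewrite full memvf.
rewrite lfunE => /(congr1 (fun t : {ffun 'I_m -> K^o} => \sum_i a i * t i)).
rewrite (bigD1 i0) //= big1 => [|i /negbTE ne]; last by rewrite ffunE ne mulr0.
rewrite ffunE eqxx mulr1 addr0.
under eq_bigr => i _ do rewrite fE mulr_sumr.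
rewrite exchange_big /= big1 => [/eqP|x _]; first by rewrite (negbTE a_i0).
transitivity (c x * \sum_i a i * W i x); last by rewrite ann mulr0.
by rewrite mulr_sumr; apply: eq_bigr => i _; ring.
Qed.

End CoefficientMaps.

Lemma dim_lker_neq (K : fieldType) (X : finType) (m : nat)
    (f g : {linear {ffun X -> K^o} -> {ffun 'I_m -> K^o}}) (Wf Wg : 'I_m -> X -> K)
    (a : 'I_m -> K) (i0 : 'I_m) :
  (forall c i, f c i = \sum_x c x * Wf i x) ->
  (forall c i, g c i = \sum_x c x * Wg i x) ->
  (forall b : 'I_m -> K, (forall x, \sum_i b i * Wf i x = 0) -> forall i, b i = 0) ->
  a i0 != 0 -> (forall x, \sum_i a i * Wg i x = 0) ->
  \dim (lker (linfun f)) <> \dim (lker (linfun g)).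
Proof.
move=> fE gE indep a_i0 ann.
have := dim_lker_limg f; have := dim_lker_limg g.
rewrite (limg_full_of_indep fE indep).
have := limg_lt_of_annihilator gE a_i0 ann; lia.
Qed.

Section FormsOnP1.
Variable K : fieldType.

Definition mon (p : K * K) (N k : nat) : K := p.1 ^+ k * p.2 ^+ (N.-1 - k).

Lemma sum2 (F : 'I_2 -> K) : \sum_i F i = F 0 + F 1.
Proof. by rewrite !big_ord_recr big_ord0 /= add0r; congr (F _ + F _); apply/val_inj. Qed.

Lemma sum3 (F : 'I_3 -> K) : \sum_i F i = F 0 + F 1 + F 2.
Proof. by rewrite !big_ord_recr big_ord0 /= add0r; congr (F _ + F _ + F _); apply/val_inj. Qed.

Lemma lin_comb_eq0 (x y z u v w X : K) :
  x = 0 -> y = 0 -> z = 0 -> X = u * x + v * y + w * z -> X = 0.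
Proof. by move=> -> -> -> ->; rewrite !mulr0 !addr0. Qed.

Definition pairwise_distinct (p : 'I_3 -> K * K) : Prop :=
  forall e e', e != e' -> (p e).1 * (p e').2 != (p e').1 * (p e).2.

Lemma pairwise_distinct_nz (p : 'I_3 -> K * K) e : pairwise_distinct p -> p e != (0, 0).
Proof.
move=> Dp; apply/eqP => pe0.
have [e' ee'] : exists e', e != e' by exists (e + 1); rewrite -subr_eq0 opprD addrA subrr.
by move: (Dp e e' ee'); rewrite pe0 /= !mul0r mulr0 eqxx.
Qed.

(* It suffices to show c 0 = 0 (translate the indices by e for the other cases), which
   follows from an explicit combination of the three equations with coefficient
   c 0 * det(p0, p1) * det(p0, p2). *)
Lemma conic_values_indep (p : 'I_3 -> K * K) (c : 'I_3 -> K) : pairwise_distinct p ->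
  (forall j, (j < 3)%N -> \sum_e c e * mon (p e) 3 j = 0) -> forall e, c e = 0.
Proof.
suff c0 q b : pairwise_distinct q ->
    (forall j, (j < 3)%N -> \sum_e b e * mon (q e) 3 j = 0) -> b 0 = 0.
  move=> Dp Hc e; rewrite -[e]add0r.
  apply: (c0 (fun i => p (i + e)) (fun i => c (i + e))) => [i i' ii'|j j3].
    by apply: Dp; rewrite (inj_eq (addIr e)).
  by rewrite -[RHS](Hc j j3) [RHS](reindex_inj (addIr e)).
move=> Dq Hb.
have S j : (j < 3)%N -> b 0 * mon (q 0) 3 j + b 1 * mon (q 1) 3 j + b 2 * mon (q 2) 3 j = 0.
  by move/Hb; rewrite sum3.
have := S 0%N isT; have := S 1%N isT; have := S 2%N isT.
rewrite /mon /= !expr0 !expr1 !mul1r !mulr1 => S2 S1 S0.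
have : b 0 * (((q 0).1 * (q 1).2 - (q 1).1 * (q 0).2)
               * ((q 0).1 * (q 2).2 - (q 2).1 * (q 0).2)) = 0.
  apply: (lin_comb_eq0 (u := (q 1).2 * (q 2).2) (v := - ((q 1).2 * (q 2).1 + (q 1).1 * (q 2).2))
    (w := (q 1).1 * (q 2).1) S2 S1 S0); ring.
by move/eqP; rewrite !mulf_eq0 !subr_eq0 (negbTE (Dq 0 1 isT)) (negbTE (Dq 0 2 isT)) !orbF => /eqP.
Qed.

(* The same for forms of any degree N - 1 >= 2: multiplying quadratic forms by the monomial
   w = x^k0 y^(N-3-k0), chosen not to vanish at p e, reduces to the quadratic case. *)
Lemma form_values_indep (N : nat) (p : 'I_3 -> K * K) (b : 'I_3 -> K) :
  (3 <= N)%N -> pairwise_distinct p ->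
  (forall k, (k < N)%N -> \sum_e b e * mon (p e) N k = 0) -> forall e, b e = 0.
Proof.
move=> N3 Dp Hb e.
pose k0 := if (p e).2 == 0 then (N - 3)%N else 0%N.
pose w i := (p i).1 ^+ k0 * (p i).2 ^+ (N - 3 - k0).
have k0_le : (k0 <= N - 3)%N by rewrite /k0; case: ifP.
have mon_shift i j : (j < 3)%N -> mon (p i) N (k0 + j) = w i * mon (p i) 3 j.
  move=> j3; rewrite /mon /w /=.
  have -> : (N.-1 - (k0 + j) = (N - 3 - k0) + (2 - j))%N by lia.
  by rewrite !exprD; ring.
have w_e : w e != 0.
  have nz := pairwise_distinct_nz e Dp.
  rewrite /w /k0; case: (eqVneq (p e).2 0) => [y0 | y_nz] /=.
    rewrite subnn expr0 mulr1 expf_neq0 //.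
    by apply: contraNneq nz => x0; rewrite [p e]surjective_pairing x0 y0.
  by rewrite expr0 mul1r expf_neq0.
have := conic_values_indep (c := fun i => b i * w i) Dp _ e.
rewrite /= => /(_ _)/eqP; rewrite mulf_eq0 (negbTE w_e) orbF => /(_ _)/eqP; apply.
move=> j j3; rewrite -[RHS](Hb (k0 + j)%N); last by lia.
by apply: eq_bigr => i _; rewrite mon_shift // mulrA.
Qed.

Lemma low_degree_form_eq0 (N : nat) (p q : K * K) (g : 'I_N -> K) :
  (N <= 2)%N -> p.1 * q.2 != q.1 * p.2 ->
  \sum_k g k * mon p N k = 0 -> \sum_k g k * mon q N k = 0 -> forall k, g k = 0.
Proof.
case: N g => [|[|[|//]]] g _ pq Ep Eq k; first by case: k.
  by rewrite (ord1 k); move: Ep; rewrite big_ord1 /mon /= !expr0 !mulr1; apply.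
move: Ep Eq; rewrite !sum2 /mon /= !expr0 !expr1 !mul1r !mulr1 => Ep Eq.
have [->|->] : k = 0 \/ k = 1 by case: k => [[|[|//]]] ?; [left|right]; apply/val_inj.
- have : g 0 * (p.1 * q.2 - q.1 * p.2) = 0.
    by apply: (lin_comb_eq0 (u := p.1) (v := - q.1) (w := 0) Eq Ep Ep); ring.
  by move/eqP; rewrite mulf_eq0 subr_eq0 (negbTE pq) orbF => /eqP.
- have : g 1 * (p.1 * q.2 - q.1 * p.2) = 0.
    by apply: (lin_comb_eq0 (u := - p.2) (v := q.2) (w := 0) Eq Ep Ep); ring.
  by move/eqP; rewrite mulf_eq0 subr_eq0 (negbTE pq) orbF => /eqP.
Qed.
End FormsOnP1.

Section GlueCoefficients.
Variables (K : fieldType) (n m : nat) (ends : 'I_m -> 'I_n * 'I_n) (d : 'I_n -> int).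

Definition coef_at (v : 'I_n) (k : 'I_(dn (d v))) : coefT d :=
  Tagged (fun w => 'I_(dn (d w))) k.

Definition eval_coef (v : 'I_n) (p : K * K) (x : coefT d) : K :=
  (tag x == v)%:R * mon p (dn (d (tag x))) (tagged x).

Lemma sec_evalE (c : secs K d) v p : sec_eval c v p = \sum_x c x * eval_coef v p x.
Proof.
have := @sig_big_dep K 0 +%R 'I_n (fun w => 'I_(dn (d w))) xpredT (fun _ => xpredT)
  (fun w k => c (coef_at k) * eval_coef v p (coef_at k)).
rewrite /= (eq_bigr (fun x => c x * eval_coef v p x)) => [<-|[]//].
rewrite (bigD1 v) //= [X in _ + X]big1 ?addr0 => [|w /negbTE wv]; last first.
  by apply: big1 => k _; rewrite /eval_coef /= wv mul0r mulr0.
by apply: eq_bigr => k _; rewrite /eval_coef /mon /= eqxx mul1r mulrA.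
Qed.

Lemma ord_dn1 (u : 'I_n) (k : 'I_(dn (d u))) (h : (0 < dn (d u))%N) :
  dn (d u) = 1%N -> k = Ordinal h.
Proof. by move=> E; apply/val_inj => /=; move: (ltn_ord k); rewrite [in X in (_ < X)%N]E; lia. Qed.

Lemma sec_eval_const (c : secs K d) u p (h : (0 < dn (d u))%N) :
  dn (d u) = 1%N -> sec_eval c u p = c (coef_at (Ordinal h)).
Proof.
move=> E; rewrite /sec_eval (bigD1 (Ordinal h)) //= big1 ?addr0 => [|k]; last first.
  by rewrite (ord_dn1 k h E) eqxx.
by rewrite (_ : ((dn (d u)).-1 - 0)%N = 0%N) ?E // !expr0 !mulr1.
Qed.

Lemma no_coef_at (w : 'I_n) : dn (d w) = 0%N -> 'I_(dn (d w)) -> False.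
Proof. by move=> Hw [k]; rewrite Hw. Qed.

Variables (pt : 'I_m -> bool -> K * K) (lam : 'I_m -> K).

Definition glue_coef (e : 'I_m) (x : coefT d) : K :=
  eval_coef (hv ends e true) (pt e true) x - lam e * eval_coef (hv ends e false) (pt e false) x.

Lemma glue_defectE c e : glue_defect ends pt lam c e = \sum_x c x * glue_coef e x.
Proof.
rewrite ffunE !sec_evalE mulr_sumr -sumrB.
by apply: eq_bigr => x _; rewrite /glue_coef; ring.
Qed.

Lemma glue_defect_linear : linear (glue_defect (d:=d) ends pt lam).
Proof.
move=> a c c'; apply/ffunP => e.
transitivity (\sum_x (a *: c + c') x * glue_coef e x); first exact: glue_defectE.
rewrite [RHS]ffunE [in RHS]ffunE !glue_defectE scaler_sumr -big_split.
by apply: eq_bigr => x _; rewrite !ffunE /= mulrDl -scalerAl.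
Qed.

HB.instance Definition _ := GRing.isSemilinear.Build K (secs K d) {ffun 'I_m -> K^o} _
  (glue_defect (d:=d) ends pt lam) (GRing.semilinear_linear glue_defect_linear).

Lemma h0_eq0 :
  (forall c : secs K d, glue_defect ends pt lam c = 0 -> c = 0) -> h0 ends d pt lam = 0%N.
Proof.
move=> inj; apply/eqP; rewrite dimv_eq0; apply/eqP/vspaceP => c.
rewrite memv_ker memv0 lfunE /=; apply/eqP/eqP => [/inj //|->]; exact: linear0.
Qed.

Lemma h0_gt0 (c : secs K d) : c != 0 -> glue_defect ends pt lam c = 0 -> (0 < h0 ends d pt lam)%N.
Proof.
move=> c_nz gc0; rewrite lt0n dimv_eq0; apply: contra c_nz => /eqP ker0.
have := memv_ker (linfun (glue_defect (d:=d) ends pt lam)) c.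
by rewrite ker0 memv0 lfunE /= gc0 eqxx.
Qed.

End GlueCoefficients.

Lemma ord2P (v : 'I_2) : v = 0 \/ v = 1.
Proof. by case: v => [[|[|//]] ?]; [left|right]; apply/val_inj. Qed.

Lemma ord2_other (u v w : 'I_2) : u != w -> v != w -> u = v.
Proof. by case: (ord2P u) (ord2P v) (ord2P w) => -> [] -> [] ->. Qed.

Lemma ord3P (e : 'I_3) : [\/ e = 0, e = 1 | e = 2].
Proof. by case: e => [[|[|[|//]]] ?]; [apply: Or31|apply: Or32|apply: Or33]; apply/val_inj. Qed.

Section G3.
Variables (K : fieldType) (d : 'I_2 -> int).

Lemma G3_hv e b : hv G3_ends e b = if b then 1 else 0.
Proof. by rewrite /hv /G3_ends; case: b; apply/val_inj. Qed.

Section GlueData.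
Variables (pt : 'I_3 -> bool -> K * K) (lam : 'I_3 -> K).

(* The glue condition at e reads f_beta(pt e true) - lam e * f_alpha(pt e false) = 0:
   the copy v enters it through the point side_point v e, with the factor side_scalar v e. *)
Definition side_scalar (v : 'I_2) (e : 'I_3) : K := if v == 1 then 1 else - lam e.
Definition side_point (v : 'I_2) (e : 'I_3) : K * K := pt e (v == 1).

Lemma G3_glue_coef v (k : 'I_(dn (d v))) e :
  glue_coef G3_ends pt lam e (coef_at k) = side_scalar v e * mon (side_point v e) (dn (d v)) k.
Proof.
move: k; have [->|->] := ord2P v => k;
  by rewrite /glue_coef /eval_coef /side_scalar /side_point /hv /G3_ends /=; ring.
Qed.

Lemma G3_glue_defect (c : secs K d) e :
  glue_defect G3_ends pt lam c e = \sum_u side_scalar u e * sec_eval c u (side_point u e).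
Proof.
rewrite ffunE sum2 /side_scalar /side_point !G3_hv eqxx (_ : (0 == 1 :> 'I_2) = false) //.
by ring.
Qed.

Hypothesis adm : admissible G3_ends pt lam.

Lemma side_point_distinct v : pairwise_distinct (side_point v).
Proof.
case: adm => _ dist _ e e' ee'; apply: dist => //.
by apply: contra ee' => /eqP [->].
Qed.

Lemma side_scalar_neq0 v e : side_scalar v e != 0.
Proof.
case: adm => _ _ lam_nz; rewrite /side_scalar.
by case: ifP => _; rewrite ?oppr_eq0 ?oner_neq0 ?lam_nz.
Qed.

Lemma h0_high_degree v : (3 <= dn (d v))%N -> (h0 G3_ends d pt lam + 3 = #|coefT d|)%N.
Proof.
move=> v3; rewrite -(dim_lker_limg (glue_defect G3_ends pt lam)).
rewrite (limg_full_of_indep (glue_defectE G3_ends pt lam)) // => a Ha e.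
suff /eqP : a e * side_scalar v e = 0.
  by rewrite mulf_eq0 (negbTE (side_scalar_neq0 v e)) orbF => /eqP.
apply: (form_values_indep (b := fun e => a e * side_scalar v e) v3 (side_point_distinct v)).
move=> k kv; rewrite -[RHS](Ha (coef_at (Ordinal kv))).
by apply: eq_bigr => e' _; rewrite G3_glue_coef mulrA.
Qed.

Lemma sec_eval_empty (c : secs K d) w p : dn (d w) = 0%N -> sec_eval c w p = 0.
Proof. by move=> Hw; apply: big1 => k; case: (no_coef_at Hw k). Qed.

(* If the copy w has negative degree and the copy v degree <= 1, a compatible section is a
   form on P^1_v vanishing at the three nodes, hence zero: h^0 = 0. *)
Lemma h0_empty_side v w : v != w -> dn (d w) = 0%N -> (dn (d v) <= 2)%N ->
  h0 G3_ends d pt lam = 0%N.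
Proof.
move=> vw Hw Hv; have wv : w != v by rewrite eq_sym.
apply: h0_eq0 => c gc0.
have vanish e : sec_eval c v (side_point v e) = 0.
  have /eqP := congr1 (fun f : {ffun 'I_3 -> K^o} => f e) gc0.
  rewrite /= G3_glue_defect ffunE (bigD1 v) //= big1 ?addr0 => [|u uv]; last first.
    by rewrite (ord2_other uv wv) sec_eval_empty ?mulr0.
  by rewrite mulf_eq0 (negbTE (side_scalar_neq0 v e)) => /eqP.
have Dv := @side_point_distinct v 0 1 isT.
have cv0 := low_degree_form_eq0 (g := fun k => c (coef_at k)) Hv Dv.
apply/ffunP => -[u k]; rewrite ffunE.
have [uw|uw] := eqVneq u w; first by move: k; rewrite uw => k; case: (no_coef_at Hw k).
move: k; rewrite (ord2_other uw vw) => k.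
apply: cv0; [rewrite -[RHS](vanish 0) | rewrite -[RHS](vanish 1)];
  by apply: eq_bigr => k' _; rewrite /mon mulrA.
Qed.

End GlueData.

Lemma not_jumping : ~~ ((0 < dn (d 0%R) <= 2) && (0 < dn (d 1%R) <= 2))%N -> ~ jumping K G3_ends d.
Proof.
move=> deg [pt [lam [pt' [lam' [adm [adm' h0_ne]]]]]]; apply: h0_ne.
have h0_high v : (3 <= dn (d v))%N -> h0 G3_ends d pt lam = h0 G3_ends d pt' lam'.
  move=> v3; apply/eqP.
  by rewrite -(eqn_add2r 3) (h0_high_degree adm v3) (h0_high_degree adm' v3).
case: (leqP 3 (dn (d 0))) => [/h0_high //|lt0]; case: (leqP 3 (dn (d 1))) => [/h0_high //|lt1].
have [z0|z1] : dn (d 0) = 0%N \/ dn (d 1) = 0%N.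
  by move: deg lt0 lt1; move: (dn (d 0)) (dn (d 1)) => x y; lia.
- have vw : (1 : 'I_2) != 0 by [].
  by rewrite (h0_empty_side adm vw z0 lt1) (h0_empty_side adm' vw z0 lt1).
- have vw : (0 : 'I_2) != 1 by [].
  by rewrite (h0_empty_side adm vw z1 lt0) (h0_empty_side adm' vw z1 lt0).
Qed.

End G3.

Section Witnesses.
Variable K : fieldType.
Hypothesis two_neq0 : (2%:R : K) != 0.

(* The nodes (1:0), (0:1), (-1:2) on both copies; the representatives are chosen so that
   x + y = 1, hence every form of degree <= 1 whose coefficients sum to 1 is 1 there. *)
Definition std_point (e : 'I_3) : K * K :=
  if e == 0 then (1, 0) else if e == 1 then (0, 1) else (-1, 2%:R).
Definition std_pts : 'I_3 -> bool -> K * K := fun e _ => std_point e.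
Definition lam_special : 'I_3 -> K := fun _ => 1.
Definition lam_generic : 'I_3 -> K := fun e => if e == 2 then 2%:R else 1.
(* (1,-2,1) is orthogonal to the values of the forms 1, x and y at the nodes. *)
Definition std_annihilator (e : 'I_3) : K := if e == 1 then - 2%:R else 1.

Lemma std_pointE : [/\ std_point 0 = (1, 0), std_point 1 = (0, 1) & std_point 2 = (-1, 2%:R)].
Proof. by []. Qed.

Lemma lam_genericE : [/\ lam_generic 0 = 1, lam_generic 1 = 1 & lam_generic 2 = 2%:R].
Proof. by []. Qed.

Lemma lam_generic_neq0 e : lam_generic e != 0.
Proof.
have [L0 L1 L2] := lam_genericE.
by have [->|->|->] := ord3P e; rewrite ?L0 ?L1 ?L2 ?oner_eq0.
Qed.

Lemma std_annihilatorE :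
  [/\ std_annihilator 0 = 1, std_annihilator 1 = - 2%:R & std_annihilator 2 = 1].
Proof. by []. Qed.

Lemma side_scalar0 (lam : 'I_3 -> K) (e : 'I_3) : side_scalar lam 0 e = - lam e.
Proof. by []. Qed.

Lemma side_scalar1 (lam : 'I_3 -> K) (e : 'I_3) : side_scalar lam 1 e = 1.
Proof. by rewrite /side_scalar eqxx. Qed.

Lemma std_point_distinct : pairwise_distinct std_point.
Proof.
have [P0 P1 P2] := std_pointE.
move=> e e'; have [->|->|->] := ord3P e; have [->|->|->] := ord3P e' => // _;
  rewrite ?P0 ?P1 ?P2 /= ?mul0r ?mulr0 ?mul1r ?mulr1 ?mulN1r ?oppr_eq0 ?oner_eq0 //;
  by rewrite ?[0 == _]eq_sym ?oppr_eq0 ?oner_eq0.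
Qed.

Lemma std_admissible lam : (forall e, lam e != 0) -> admissible G3_ends std_pts lam.
Proof.
move=> lam_nz; split => // [e b|e b e' b' ne].
  exact: pairwise_distinct_nz std_point_distinct.
rewrite !G3_hv => hb; apply: std_point_distinct; apply: contra ne => /eqP ->.
by move: hb; case: b; case: b' => // /(congr1 val).
Qed.

Lemma std_mon_sum N e : (0 < N <= 2)%N -> \sum_(k < N) mon (std_point e) N k = 1.
Proof.
have [P0 P1 P2] := std_pointE.
case: N => [|[|[|//]]] // _; first by rewrite big_ord1 /mon /= !expr0 mulr1.
rewrite sum2 /mon /= !expr0 !expr1 !mul1r !mulr1.
by have [->|->|->] := ord3P e; rewrite ?P0 ?P1 ?P2 /=; ring.
Qed.

Lemma std_annihilator_mon N k : (k < N <= 2)%N ->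
  \sum_e std_annihilator e * mon (std_point e) N k = 0.
Proof.
have [P0 P1 P2] := std_pointE; have [A0 A1 A2] := std_annihilatorE.
case: N => [|[|[|N]]] hk; [by rewrite ltn0 in hk | have -> : k = 0%N by lia
  | have [->|->] : k = 0%N \/ k = 1%N by lia | by case/andP: hk];
  by rewrite sum3 P0 P1 P2 A0 A1 A2 /mon /=; ring.
Qed.

Variable d : 'I_2 -> int.

(* Consequently a vanishing combination a of the glue rows satisfies, for each copy v of
   degree in {0, 1}, sum_e a e * side_scalar v e = 0 (sum the columns of copy v) ... *)
Lemma std_column_sum lam (a : 'I_3 -> K) v : (0 < dn (d v) <= 2)%N ->
  (forall x, \sum_e a e * glue_coef (d:=d) G3_ends std_pts lam e x = 0) ->
  \sum_e a e * side_scalar lam v e = 0.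
Proof.
move=> hv Ha.
transitivity (\sum_(k < dn (d v)) \sum_e a e * glue_coef (d:=d) G3_ends std_pts lam e (coef_at k)).
  rewrite exchange_big; apply: eq_bigr => e _ /=.
  rewrite -[LHS]mulr1 -(std_mon_sum e hv) !mulr_sumr; apply: eq_bigr => k _.
  by rewrite G3_glue_coef /side_point /std_pts mulrA.
by apply: big1 => k _; exact: Ha.
Qed.

Lemma std_column_x lam (a : 'I_3 -> K) v : dn (d v) = 2%N ->
  (forall x, \sum_e a e * glue_coef (d:=d) G3_ends std_pts lam e x = 0) ->
  \sum_e a e * side_scalar lam v e * (std_point e).1 = 0.
Proof.
move=> E Ha; have k1 : (1 < dn (d v))%N by rewrite E.
rewrite -[RHS](Ha (coef_at (Ordinal k1))); apply: eq_bigr => e _.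
by rewrite G3_glue_coef /= E /mon /= expr1 subnn expr0 mulr1 mulrA.
Qed.

Lemma generic_indep : (0 < dn (d 0%R) <= 2)%N -> (0 < dn (d 1%R) <= 2)%N ->
  (dn (d 0%R) == 2) || (dn (d 1%R) == 2) ->
  forall a : 'I_3 -> K,
    (forall x, \sum_e a e * glue_coef (d:=d) G3_ends std_pts lam_generic e x = 0) ->
  forall e, a e = 0.
Proof.
have [P0 P1 P2] := std_pointE; have [L0 L1 L2] := lam_genericE.
move=> deg0 deg1 linear_side a Ha.
have := std_column_sum deg1 Ha; have := std_column_sum deg0 Ha.
rewrite !sum3 !(side_scalar0, side_scalar1, L0, L1, L2) => B A.
have a2 : a 2 = 0 by apply: (lin_comb_eq0 (u := -1) (v := -1) (w := 0) A B B); ring.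
have a0 : a 0 = 0.
  case/orP: linear_side => /eqP /std_column_x /(_ Ha);
    rewrite sum3 !(side_scalar0, side_scalar1, L0, L1, L2, P0, P1, P2) /= => C.
  - by apply: (lin_comb_eq0 (u := -1) (v := 2%:R) (w := 0) C a2 a2); ring.
  - by apply: (lin_comb_eq0 (u := 1) (v := 1) (w := 0) C a2 a2); ring.
have a1 : a 1 = 0 by apply: (lin_comb_eq0 (u := 1) (v := -1) (w := -1) A a0 a2); ring.
by move=> e; have [->|->|->] := ord3P e.
Qed.

Lemma special_annihilated : (dn (d 0%R) <= 2)%N -> (dn (d 1%R) <= 2)%N ->
  forall x, \sum_e std_annihilator e * glue_coef (d:=d) G3_ends std_pts lam_special e x = 0.
Proof.
move=> deg0 deg1 [v k].
have hv : (k < dn (d v) <= 2)%N by rewrite ltn_ord; case: (ord2P v) => ->.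
transitivity (side_scalar lam_special v 0 *
  \sum_e std_annihilator e * mon (std_point e) (dn (d v)) k).
  rewrite mulr_sumr; apply: eq_bigr => e _.
  by rewrite G3_glue_coef /side_scalar /side_point /std_pts /lam_special; ring.
by rewrite std_annihilator_mon ?mulr0.
Qed.

Lemma jumping_full_rank : (0 < dn (d 0%R) <= 2)%N -> (0 < dn (d 1%R) <= 2)%N ->
  (dn (d 0%R) == 2) || (dn (d 1%R) == 2) -> jumping K G3_ends d.
Proof.
have [A0 _ _] := std_annihilatorE.
move=> deg0 deg1 linear_side.
exists std_pts, lam_generic, std_pts, lam_special; split; [|split].
- exact: std_admissible lam_generic_neq0.
- by apply: std_admissible => e; exact: oner_neq0.
- apply: (dim_lker_neq (glue_defectE G3_ends std_pts lam_generic)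
    (glue_defectE G3_ends std_pts lam_special) (generic_indep deg0 deg1 linear_side)
    (a := std_annihilator) (i0 := 0)).
    by rewrite A0 oner_eq0.
  by apply: special_annihilated; [case/andP: deg0 | case/andP: deg1].
Qed.

(* ... and also in degrees (0, 0): compatible sections are pairs of constants (a, b) with
   b = lam e * a, so h^0 = 1 for the data (1,1,1) and h^0 = 0 for (1,1,2). *)
Lemma jumping_constant : dn (d 0%R) = 1%N -> dn (d 1%R) = 1%N -> jumping K G3_ends d.
Proof.
move=> E0 E1; have pos0 : (0 < dn (d 0%R))%N by rewrite E0.
have pos1 : (0 < dn (d 1%R))%N by rewrite E1.
have glueE (lam : 'I_3 -> K) (c : secs K d) e : glue_defect G3_ends std_pts lam c e =
    c (coef_at (Ordinal pos1)) - lam e * c (coef_at (Ordinal pos0)).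
  rewrite G3_glue_defect sum2 (sec_eval_const c _ pos0 E0) (sec_eval_const c _ pos1 E1).
  by rewrite side_scalar0 side_scalar1; ring.
have special_pos : (0 < h0 G3_ends d std_pts lam_special)%N.
  apply: (h0_gt0 (c := [ffun _ => 1])).
    apply/eqP => /ffunP /(_ (coef_at (Ordinal pos0))) /eqP.
    by rewrite !ffunE oner_eq0.
  by apply/ffunP => e; rewrite glueE !ffunE /lam_special; ring.
have generic_zero : h0 G3_ends d std_pts lam_generic = 0%N.
  have [L0 _ L2] := lam_genericE.
  apply: h0_eq0 => c gc0.
  have := congr1 (fun f : {ffun 'I_3 -> K^o} => f 0) gc0.
  have := congr1 (fun f : {ffun 'I_3 -> K^o} => f 2) gc0.
  rewrite /= !glueE !ffunE L0 L2 => g2 g0.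
  have ca : c (coef_at (Ordinal pos0)) = 0.
    by apply: (lin_comb_eq0 (u := 1) (v := -1) (w := 0) g0 g2 g2); ring.
  have cb : c (coef_at (Ordinal pos1)) = 0.
    by apply: (lin_comb_eq0 (u := 2%:R) (v := -1) (w := 0) g0 g2 g2); ring.
  apply/ffunP => -[u k]; rewrite ffunE; move: k.
  by have [->|->] := ord2P u => k; [rewrite (ord_dn1 k pos0 E0) | rewrite (ord_dn1 k pos1 E1)].
exists std_pts, lam_special, std_pts, lam_generic; split; [|split].
- by apply: std_admissible => e; exact: oner_neq0.
- exact: std_admissible lam_generic_neq0.
- by rewrite generic_zero => E; move: special_pos; rewrite E.
Qed.

Lemma jumping_small_degrees : (0 < dn (d 0%R) <= 2)%N -> (0 < dn (d 1%R) <= 2)%N ->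
  jumping K G3_ends d.
Proof.
move=> deg0 deg1; have [linear_side|] := boolP ((dn (d 0%R) == 2) || (dn (d 1%R) == 2)).
  exact: jumping_full_rank.
rewrite negb_or => /andP [/eqP ne0 /eqP ne1]; apply: jumping_constant; lia.
Qed.

End Witnesses.

Lemma dn_range (x : int) : (0 <= x <= 1) = (0 < dn x <= 2)%N.
Proof. by case: x => [[|[|n]]|n]. Qed.

Theorem mainTheorem10 (R : realType) (da db : int) :
  jumping (R[i]) G3_ends (deg2 da db) <->
  ((0 <= da <= 1) /\ (0 <= db <= 1)).
Proof.
have two : (2%:R : R[i]) != 0 by rewrite pnatr_eq0.
rewrite !dn_range; split => [J | [deg_a deg_b]].
  by apply/andP; apply: contraT => deg; case: (not_jumping deg J).
exact: (jumping_small_degrees (d := deg2 da db) two deg_a deg_b).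
Qed.
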